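(* Let $r:V\times V\to\{0,1\}$. If an undirected edge set (multigraph) $H$ on $V$ covers $f_r$, i.e., $d_H(X)\ge f_r(X)$ for all $X\subseteq V$, then $H$ has an orientation $D$ such that $D$ contains a directed $uv$-path for every $(u,v)$ with $r(u,v)=1$.
   Context: For $X\subseteq V$ let $\bar X=V\setminus X$, and $d_H(X)$ the number of edges of $H$ with one endpoint in $X$ and the other in $\bar X$. The set function $f_r$ is defined by $f_r(\emptyset)=f_r(V)=0$ and, for $\emptyset\ne X\subsetneq V$, $f_r(X)=\max\{r(u,v):u\in X,v\in\bar X\}+\max\{r(v,u):u\in X,v\in\bar X\}$. *)

From mathcomp Require Import all_boot.
Set Implicit Arguments. Unset Strict Implicit. Unset Printing Implicit Defensive.

(* A multigraph H on V is a sequence of (unordered) edges, each stored as a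
   pair of endpoints; multiplicities are allowed. *)

Definition dcut (V : finType) (H : seq (V * V)) (X : {set V}) : nat :=
  count (fun e => (e.1 \in X) != (e.2 \in X)) H.

Definition f_r (V : finType) (r : V -> V -> bool) (X : {set V}) : nat :=
  if (X == set0) || (X == setT) then 0
  else (\max_(u in X) \max_(v in ~: X) nat_of_bool (r u v))
     + (\max_(u in X) \max_(v in ~: X) nat_of_bool (r v u)).

Definition is_orientation (V : finType) (H D : seq (V * V)) : bool :=
  all2 (fun e d => (d == e) || (d == (e.2, e.1))) H D.

Definition dipath (V : finType) (D : seq (V * V)) (u v : V) : bool :=
  connect (fun x y => (x, y) \in D) u v.

From mathcomp Require Import all_boot.
Set Implicit Arguments. Unset Strict Implicit. Unset Printing Implicit Defensive.

(* We show "covers -> orientable" by strong induction on the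
   number of edges.  Let ab be the first edge of H and H' the remaining ones.
   - Cycle case (b reaches a in H'): a simple b-a path of H' closes with ab into
     a cycle, oriented cyclically, so its vertices become mutually reachable.
     Contracting the cycle to a single vertex preserves covering (cuts of the
     contracted graph are cuts of H that do not split the cycle), it removes at
     least one edge, and every orientation of the contracted graph lifts back.
   - Bridge case: let X be the component of b in H'.  Only ab crosses X, so
     f_r(X) <= 1 and all requirements crossing X point the same way; ab is
     oriented that way, and each crossing requirement u->v is rerouted as two
     requirements ending and starting at the endpoints of ab, within H'.  H'
     still covers them: each cut Y of H' splits into two cuts of H, one on each
     side of the bridge. *)

Section Demands.
Variable V : finType.
Implicit Types (r : V -> V -> bool) (X : {set V}).

Definition demand_out r X : bool :=
  [exists u, exists v, [&& u \in X, v \notin X & r u v]].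

Definition converse r : V -> V -> bool := fun u v => r v u.

Lemma demand_out_intro r X u v :
  u \in X -> v \notin X -> r u v -> demand_out r X.
Proof.
by move=> uX vX ruv; apply/existsP; exists u; apply/existsP; exists v; apply/and3P.
Qed.

Lemma demand_outPn r X :
  ~~ demand_out r X -> forall u v, r u v -> u \in X -> v \in X.
Proof.
by move=> none u v ruv uX; apply: contraNT none => vX; apply: demand_out_intro ruv.
Qed.

Lemma eq_demand_out r1 r2 X : r1 =2 r2 -> demand_out r1 X = demand_out r2 X.
Proof.
by move=> e; apply: eq_existsb => u; apply: eq_existsb => v; rewrite e.
Qed.

Lemma bigmax_demand r X :
  \max_(u in X) \max_(v in ~: X) nat_of_bool (r u v) = demand_out r X.
Proof.
apply/eqP; rewrite eqn_leq; apply/andP; split.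
- apply/bigmax_leqP => u uX; apply/bigmax_leqP => v; rewrite in_setC => vX.
  by case ruv: (r u v) => //; rewrite lt0b (demand_out_intro uX vX ruv).
- case: (boolP (demand_out r X)) => // /existsP [u /existsP [v /and3P [uX vX ruv]]].
  apply: leq_trans (leq_bigmax_cond _ uX).
  by rewrite -in_setC in vX; apply: leq_trans (leq_bigmax_cond _ vX); rewrite ruv.
Qed.

Lemma demand_out_trivial r X : (X == set0) || (X == setT) -> demand_out r X = false.
Proof.
case/orP => /eqP ->; apply/negbTE/existsP => -[u /existsP [v]];
by rewrite ?inE ?andbF.
Qed.

Lemma f_rE r X : f_r r X = demand_out r X + demand_out (converse r) X.
Proof.
rewrite /f_r; case: ifP => [triv | _]; last by rewrite !bigmax_demand.
by rewrite !demand_out_trivial.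
Qed.

End Demands.

Lemma perm_zip (S T : eqType) (Z : seq (S * T)) (H : seq S) :
  perm_eq H (unzip1 Z) -> exists D, size D = size H /\ perm_eq (zip H D) Z.
Proof.
elim: H Z => [|e H IH] Z pHZ.
  by exists [::]; case: Z pHZ => // z Z; rewrite perm_sym => /perm_nilP.
have : e \in unzip1 Z by rewrite -(perm_mem pHZ) mem_head.
case/mapP => [[e' d] zZ /= eq_e]; subst e'.
have pZ := perm_to_rem zZ.
have pH : perm_eq H (unzip1 (rem (e, d) Z)).
  by rewrite -(perm_cons e); apply: perm_trans pHZ (perm_map _ pZ).
case: (IH _ pH) => D [sD pD].
exists (d :: D); split; first by rewrite /= sD.
by rewrite -(perm_cons (e, d)) in pD; rewrite /= (permPl pD) perm_sym.
Qed.

Section Orientations.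
Variable V : finType.
Implicit Types (H D : seq (V * V)) (X : {set V}) (r : V -> V -> bool).

Definition crosses X (e : V * V) : bool := (e.1 \in X) != (e.2 \in X).

Lemma dcut_cat H1 H2 X : dcut (H1 ++ H2) X = dcut H1 X + dcut H2 X.
Proof. exact: count_cat. Qed.

Lemma dcut_perm H1 H2 X : perm_eq H1 H2 -> dcut H1 X = dcut H2 X.
Proof. by move/permP => p; rewrite /dcut p. Qed.

Lemma dcut_flip x y H X : dcut ((y, x) :: H) X = dcut ((x, y) :: H) X.
Proof. by rewrite /dcut /= eq_sym. Qed.

Lemma dcut_closed H X :
  (forall e, e \in H -> (e.1 \in X) = (e.2 \in X)) -> dcut H X = 0.
Proof.
move=> same_side; apply/eqP; rewrite -leqn0 leqNgt -has_count.
by apply/hasPn => e /same_side /= ->; rewrite eqxx.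
Qed.

Definition darc D : rel V := fun x y => (x, y) \in D.

Definition covers H r := forall X, f_r r X <= dcut H X.

Definition orientable H r :=
  exists D, is_orientation H D /\ forall u v, r u v -> connect (darc D) u v.

Lemma connect_darc_sub D1 D2 u v :
  {subset D1 <= D2} -> connect (darc D1) u v -> connect (darc D2) u v.
Proof. by move=> sub; apply: connect_sub => x y /sub; apply: connect1. Qed.

Lemma orient_cat H1 H2 D1 D2 : is_orientation H1 D1 -> is_orientation H2 D2 ->
  is_orientation (H1 ++ H2) (D1 ++ D2).
Proof.
rewrite /is_orientation; elim: H1 D1 => [|e H1 IH] [|d D1] //= /andP [-> /IH].
exact.
Qed.

Lemma orientable_perm H1 H2 r : perm_eq H1 H2 -> orientable H2 r -> orientable H1 r.
Proof.
move=> p12 [D2 [o2 sat2]].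
move: o2; rewrite /is_orientation all2E => /andP [/eqP s2 o2].
have : perm_eq H1 (unzip1 (zip H2 D2)) by rewrite unzip1_zip ?s2.
case/perm_zip => D1 [s1 pZ].
have memD : D1 =i D2.
  apply: perm_mem; have := perm_map snd pZ.
  by rewrite -!/(unzip2 _) !unzip2_zip ?s1 ?s2.
exists D1; split.
  by rewrite /is_orientation all2E s1 eqxx (perm_all _ pZ).
move=> u v /sat2; apply: connect_darc_sub => e; by rewrite memD.
Qed.

Lemma orientable_flip x y H r :
  orientable ((y, x) :: H) r -> orientable ((x, y) :: H) r.
Proof.
case=> [[|d D] [o sat]] //; exists (d :: D); split => //.
by move: o; rewrite /is_orientation /= orbC.
Qed.

End Orientations.

Section Contraction.
Variables (V : finType) (g : V -> V).
Implicit Types (H C D R : seq (V * V)) (X Y : {set V}) (r : V -> V -> bool).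

(* Contraction along g : V -> V, identifying the vertices of each fiber. *)
Definition edge_map (e : V * V) : V * V := (g e.1, g e.2).

Definition req_map r : V -> V -> bool :=
  fun x y => [exists u, exists v, [&& g u == x, g v == y & r u v]].

Lemma demand_out_map r Y :
  demand_out (req_map r) Y -> demand_out r [set z | g z \in Y].
Proof.
case/existsP => x /existsP [y /and3P [xY yY]].
case/existsP => u /existsP [v /and3P [/eqP gu /eqP gv ruv]].
by apply: (demand_out_intro _ _ ruv); rewrite !inE ?gu ?gv.
Qed.

Lemma converse_req_map r : converse (req_map r) =2 req_map (converse r).
Proof.
move=> x y; rewrite /converse; apply/existsP/existsP => -[u /existsP [v /and3P [gu gv ruv]]];
by exists v; apply/existsP; exists u; rewrite gu gv ruv.
Qed.

(* Contracting edges C whose ends share a fiber preserves covering: a cut of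
   the contracted graph is a cut of H that no edge of C crosses. *)
Lemma contract_cover C R r :
  (forall e, e \in C -> g e.1 = g e.2) -> covers (C ++ R) r ->
  covers (map edge_map R) (req_map r).
Proof.
move=> gC cov Y; pose X := [set z | g z \in Y].
have -> : dcut (map edge_map R) Y = dcut R X.
  by rewrite /dcut count_map; apply: eq_count => e; rewrite /= !inE.
have := cov X; rewrite dcut_cat dcut_closed ?add0n; last first.
  by move=> e /gC; rewrite !inE => ->.
apply: leq_trans; rewrite !f_rE (eq_demand_out _ (converse_req_map r)).
have lift r' : (demand_out (req_map r') Y : nat) <= demand_out r' X.
  by case: (boolP (demand_out _ Y)) => // /demand_out_map ->.
exact: leq_add (lift _) (lift _).
Qed.

Definition lift_arc (e d : V * V) : V * V :=
  if d == edge_map e then e else (e.2, e.1).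

Lemma lift_orientation R Dg : is_orientation (map edge_map R) Dg ->
  exists DR, is_orientation R DR /\ forall p q, (p, q) \in Dg ->
    exists x y, [/\ (x, y) \in DR, g x = p & g y = q].
Proof.
elim: R Dg => [|e R IH] [|d Dg] //=.
  by exists [::]; split.
case/andP => de /IH [DR [oR arcs]].
exists (lift_arc e d :: DR); split.
  by rewrite /= oR andbT /lift_arc; case: ifP; rewrite eqxx ?orbT.
move=> p q; rewrite in_cons => /orP [/eqP pq | /arcs [x [y [xy gx gy]]]]; last first.
  by exists x, y; rewrite in_cons xy orbT.
rewrite /lift_arc -pq; case: ifP => [/eqP [gx gy] | ne].
  by exists e.1, e.2; rewrite gx gy mem_head.
by move: de; rewrite -pq ne /= => /eqP [-> ->]; exists e.2, e.1; rewrite mem_head.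
Qed.

Lemma connect_lift D Dg :
  (forall x y, g x = g y -> connect (darc D) x y) ->
  (forall p q, (p, q) \in Dg -> exists x y, [/\ (x, y) \in D, g x = p & g y = q]) ->
  forall x y, connect (darc Dg) (g x) (g y) -> connect (darc D) x y.
Proof.
move=> fib arcs x y /connectP [s]; elim: s x => [|p s IH] x /=.
  by move=> _ /esym /fib.
case/andP => /arcs [x1 [y1 [xy1 gx1 gy1]]] ps ls.
apply: connect_trans (fib x x1 _) _; first by rewrite gx1.
apply: connect_trans (connect1 xy1) _.
by apply: IH; rewrite gy1.
Qed.

Lemma contract_step C DC R r :
  is_orientation C DC -> (forall x y, g x = g y -> connect (darc DC) x y) ->
  orientable (map edge_map R) (req_map r) -> orientable (C ++ R) r.
Proof.
move=> oC fib [Dg [oDg sat]]; case: (lift_orientation oDg) => DR [oR arcs].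
exists (DC ++ DR); split; first exact: orient_cat.
move=> u v ruv; apply: (@connect_lift _ Dg).
- by move=> x y /fib; apply: connect_darc_sub => e; rewrite mem_cat => ->.
- move=> p q /arcs [x [y [xy gx gy]]].
  by exists x, y; rewrite mem_cat xy orbT.
- by apply: sat; apply/existsP; exists u; apply/existsP; exists v; rewrite !eqxx ruv.
Qed.

End Contraction.

Lemma connect_to_last (T : finType) (e : rel T) x p z :
  path e x p -> z \in x :: p -> connect e z (last x p).
Proof.
elim: p x z => [|y p IH] x z /=; first by move=> _; rewrite mem_seq1 => /eqP ->.
case/andP => exy py; rewrite in_cons => /orP [/eqP -> | /(IH _ _ py)] //.
exact: connect_trans (connect1 exy) (IH y y py (mem_head _ _)).
Qed.

Lemma cycle_connect (T : finType) (e : rel T) x p :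
  path e x p -> e (last x p) x ->
  forall z w, z \in x :: p -> w \in x :: p -> connect e z w.
Proof.
move=> px closing z w zp wp.
apply: connect_trans (connect_to_last px zp) _.
exact: connect_trans (connect1 closing) (path_connect px wp).
Qed.

Section Cycles.
Variable V : finType.
Implicit Types (H D C R : seq (V * V)) (r : V -> V -> bool).

Definition adj H : rel V := fun x y => ((x, y) \in H) || ((y, x) \in H).

Lemma path_edges H x p :
  path (adj H) x p -> uniq (x :: p) ->
  exists C DC R, [/\ perm_eq H (C ++ R), is_orientation C DC, path (darc DC) x p &
    forall e, e \in C -> (e.1 \in x :: p) && (e.2 \in x :: p)].
Proof.
elim: p x H => [|y p IH] x H.
  by move=> _ _; exists [::], [::], H.
case/andP => xy py /andP [xp up].
pose e := if (x, y) \in H then (x, y) else (y, x).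
have eH : e \in H by rewrite /e; case: ifP => // xyH; move: xy; rewrite /adj xyH.
have py' : path (adj (rem e H)) y p.
  have ne u v : u != x -> v != x -> (u, v) != e.
    by move=> ux vx; rewrite /e; case: ifP => _; rewrite xpair_eqE negb_and ?ux ?vx ?orbT.
  apply: (sub_in_path (P := predC1 x)) _ _ py.
    move=> u v ux vx /orP uv; apply/orP.
    by case: uv => uv; [left | right]; apply: rem_mem; rewrite ?ne.
  by apply/allP => z zp /=; apply: contraNneq xp => <-.
case: (IH y (rem e H) py' up) => C [DC [R [pCR oC pDC endsC]]].
exists (e :: C), ((x, y) :: DC), R; split.
- by apply: perm_trans (perm_to_rem eH) _; rewrite /= perm_cons.
- by rewrite /is_orientation /= -/(is_orientation C DC) oC andbT /e; case: ifP; rewrite eqxx ?orbT.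
- rewrite /= /darc mem_head /=; apply: sub_path pDC => u v.
  by rewrite /darc in_cons => ->; rewrite orbT.
- move=> f; rewrite in_cons => /orP [/eqP -> | /endsC /andP [f1 f2]].
    by rewrite /e; case: ifP => _; rewrite !in_cons !eqxx ?orbT.
  by rewrite in_cons f1 in_cons f2 !orbT.
Qed.

(* Cycle case: close a simple b-a path with the edge ab into a directed cycle,
   contract the cycle onto its vertex a, and use the induction hypothesis. *)
Lemma cycle_step a b H r :
  (forall H2 r2, size H2 <= size H -> covers H2 r2 -> orientable H2 r2) ->
  connect (adj H) b a -> covers ((a, b) :: H) r -> orientable ((a, b) :: H) r.
Proof.
move=> IH /connectP [_ /shortenP [p pp up _] ->] cov.
case: (path_edges pp up) => C [DC [R [pHCR oC pDC endsC]]].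
pose g z := if z \in b :: p then last b p else z.
have aS : last b p \in b :: p by apply: mem_last.
have fib x y : g x = g y -> connect (darc ((last b p, b) :: DC)) x y.
  have cyc := @cycle_connect _ (darc ((last b p, b) :: DC)) b p.
  rewrite /g; case: ifP => xS; case: ifP => yS.
  - move=> _; apply: cyc => //; last by rewrite /darc mem_head.
    by apply: sub_path pDC => u v; rewrite /darc in_cons => ->; rewrite orbT.
  - by move=> ay; rewrite -ay aS in yS.
  - by move=> xa; rewrite xa aS in xS.
  - by move=> ->; apply: connect0.
have gC e : e \in (last b p, b) :: C -> g e.1 = g e.2.
  rewrite in_cons => /orP [/eqP -> | /endsC /andP [e1 e2]]; last by rewrite /g e1 e2.
  by rewrite /g /= aS mem_head.
have pH : perm_eq ((last b p, b) :: H) (((last b p, b) :: C) ++ R).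
  by rewrite /= perm_cons.
have covCR : covers (((last b p, b) :: C) ++ R) r.
  by move=> X; rewrite -(dcut_perm X pH).
apply: (orientable_perm pH).
apply: (contract_step (DC := (last b p, b) :: DC)) fib _.
  by rewrite /is_orientation /= eqxx.
apply: IH (contract_cover gC covCR).
by rewrite size_map (perm_size pHCR) size_cat leq_addl.
Qed.

End Cycles.

Section Bridges.
Variable V : finType.
Implicit Types (H D : seq (V * V)) (X Y : {set V}) (r : V -> V -> bool).

(* Rerouting through a bridge s -> t with s outside X and t inside: a
   requirement u -> v from outside to inside becomes u -> s and t -> v. *)
Definition bridge_req r s t X : V -> V -> bool := fun u v =>
  [|| r u v && ((u \in X) == (v \in X)),
      [&& u \notin X, v == s & [exists w, (w \in X) && r u w]] |
      [&& u == t, v \in X & [exists w, (w \notin X) && r w v]]].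

(* The part of the cut Y on the X side of the bridge, with the whole other
   side added when the X-end t of the bridge lies in Y; it is a cut of H
   that the bridge does not cross. *)
Definition side_cut X t Y : {set V} :=
  (Y :&: X) :|: [set z | (t \in Y) && (z \notin X)].

Lemma side_cut_in X t Y z : z \in X -> (z \in side_cut X t Y) = (z \in Y).
Proof. by move=> zX; rewrite !inE zX andbT andbF orbF. Qed.

Lemma side_cut_out X t Y z : z \notin X -> (z \in side_cut X t Y) = (t \in Y).
Proof. by move=> zX; rewrite !inE (negbTE zX) andbF andbT. Qed.

Lemma converse_bridge_req r s t X :
  converse (bridge_req r s t X) =2 bridge_req (converse r) t s (~: X).
Proof.
move=> u v; rewrite /converse /bridge_req !in_setC !negbK (inj_eq negb_inj) eq_sym.
have -> : [exists w, (w \in ~: X) && r w u] = [exists w, (w \notin X) && r w u].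
  by apply: eq_existsb => w; rewrite in_setC.
have -> : [exists w, (w \notin ~: X) && r v w] = [exists w, (w \in X) && r v w].
  by apply: eq_existsb => w; rewrite in_setC negbK.
move: [exists w, _ && r v w] [exists w, _ && r w u] => E1 E2.
by case: (r v u); case: (u \in X); case: (v \in X); case: (u == s); case: (v == t);
  case: E1; case: E2.
Qed.

Lemma dcut_side_cuts s t X H Y :
  s \notin X -> t \in X -> (forall e, e \in H -> (e.1 \in X) = (e.2 \in X)) ->
  dcut H Y = dcut H (side_cut X t Y) + dcut H (side_cut (~: X) s Y).
Proof.
move=> sX tX same_side.
have split_edge e : (e.1 \in X) = (e.2 \in X) ->
    (crosses (side_cut X t Y) e || crosses (side_cut (~: X) s Y) e = crosses Y e)
    /\ (crosses (side_cut X t Y) e && crosses (side_cut (~: X) s Y) e = false).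
  case: e => x y /= sameX; rewrite /crosses /=.
  have [xX | xX] := boolP (x \in X).
  - have xC : x \notin ~: X by rewrite in_setC xX.
    have yX : y \in X by rewrite -sameX.
    have yC : y \notin ~: X by rewrite in_setC yX.
    rewrite !(side_cut_in _ _ xX, side_cut_in _ _ yX, side_cut_out _ _ xC, side_cut_out _ _ yC).
    by rewrite eqxx orbF andbF.
  - have xC : x \in ~: X by rewrite in_setC.
    have yX : y \notin X by rewrite -sameX.
    have yC : y \in ~: X by rewrite in_setC.
    rewrite !(side_cut_out _ _ xX, side_cut_out _ _ yX, side_cut_in _ _ xC, side_cut_in _ _ yC).
    by rewrite eqxx.
rewrite /dcut -count_predUI.
rewrite (@eq_in_count _ (predI _ _) pred0) ?count_pred0 ?addn0; last first.
  by move=> e /same_side /split_edge [].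
by apply: eq_in_count => e /same_side /split_edge [].
Qed.

Lemma bridge_demand_out r s t X Y : s \notin X -> t \in X ->
  demand_out (bridge_req r s t X) Y ->
  demand_out r (side_cut X t Y) || demand_out r (side_cut (~: X) s Y).
Proof.
move=> sX tX /existsP [u /existsP [v /and3P [uY vY]]].
case/or3P => [/andP [ruv /eqP sameX] | /and3P [uX /eqP vs /existsP [w /andP [wX ruw]]]
             | /and3P [/eqP ut vX /existsP [w /andP [wX rwv]]]].
- have [uX | uX] := boolP (u \in X).
  + have vX : v \in X by rewrite -sameX.
    by apply/orP; left; apply: (demand_out_intro _ _ ruv); rewrite side_cut_in.
  + have uC : u \in ~: X by rewrite in_setC.
    have vC : v \in ~: X by rewrite in_setC -sameX.
    by apply/orP; right; apply: (demand_out_intro _ _ ruv); rewrite side_cut_in.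
- have uC : u \in ~: X by rewrite in_setC.
  have wC : w \notin ~: X by rewrite in_setC wX.
  apply/orP; right; apply: (demand_out_intro _ _ ruw).
    by rewrite (side_cut_in _ _ uC).
  by rewrite (side_cut_out _ _ wC) -vs.
- apply/orP; left; apply: (demand_out_intro _ _ rwv).
    by rewrite (side_cut_out _ _ wX) -ut.
  by rewrite (side_cut_in _ _ vX).
Qed.

Lemma bridge_cover r s t X H : s \notin X -> t \in X ->
  (forall e, e \in H -> (e.1 \in X) = (e.2 \in X)) ->
  covers ((s, t) :: H) r -> covers H (bridge_req r s t X).
Proof.
move=> sX tX same_side cov Y; rewrite (dcut_side_cuts Y sX tX same_side).
have cov_side (Z : {set V}) : (s \in Z) = (t \in Z) -> f_r r Z <= dcut H Z.
  by move=> stZ; have := cov Z; rewrite /dcut /= stZ eqxx.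
have cov1 : f_r r (side_cut X t Y) <= dcut H (side_cut X t Y).
  by apply: cov_side; rewrite (side_cut_out _ _ sX) (side_cut_in _ _ tX).
have cov2 : f_r r (side_cut (~: X) s Y) <= dcut H (side_cut (~: X) s Y).
  have sC : s \in ~: X by rewrite in_setC.
  have tC : t \notin ~: X by rewrite in_setC tX.
  by apply: cov_side; rewrite (side_cut_in _ _ sC) (side_cut_out _ _ tC).
have le_orb (b b1 b2 : bool) : (b -> b1 || b2) -> b <= b1 + b2.
  by case: b => // /(_ isT); case: b1; case: b2.
apply: leq_trans (leq_add cov1 cov2).
rewrite !f_rE addnACA; apply: leq_add; apply: le_orb.
  exact: bridge_demand_out.
rewrite (eq_demand_out _ (converse_bridge_req r s t X)) orbC => /bridge_demand_out.
by rewrite setCK; apply; rewrite ?in_setC ?negbK.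
Qed.

Lemma bridge_orient r s t X H :
  (forall u v, r u v -> u \in X -> v \in X) ->
  orientable H (bridge_req r s t X) -> orientable ((s, t) :: H) r.
Proof.
move=> no_exit [D [oD sat]]; exists ((s, t) :: D); split.
  by rewrite /is_orientation /= eqxx.
have sub : {subset D <= (s, t) :: D} by move=> e eD; rewrite in_cons eD orbT.
move=> u v ruv; have [same | cross] := eqVneq (u \in X) (v \in X).
  by apply: connect_darc_sub sub _; apply: sat; rewrite /bridge_req ruv same eqxx.
have uX : u \notin X by apply: contra cross => uX; rewrite uX (no_exit _ _ ruv uX).
have vX : v \in X by move: cross; rewrite (negbTE uX); case: (v \in X).
apply: (connect_trans (y := s)); last apply: (connect_trans (y := t)).
- apply: connect_darc_sub sub _; apply: sat; apply/or3P; apply: Or32.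
  by rewrite uX eqxx; apply/existsP; exists v; rewrite vX ruv.
- by apply: connect1; rewrite /darc mem_head.
- apply: connect_darc_sub sub _; apply: sat; apply/or3P; apply: Or33.
  by rewrite eqxx vX; apply/existsP; exists u; rewrite uX ruv.
Qed.

End Bridges.

Section Induction.
Variable V : finType.
Implicit Types (H : seq (V * V)) (r : V -> V -> bool).

(* Without edges, covering forces all requirements to be loops. *)
Lemma orientable_nil r : covers [::] r -> orientable [::] r.
Proof.
move=> cov; exists [::]; split => // u v ruv.
have [-> | uv] := eqVneq u v; first exact: connect0.
have := cov [set u]; rewrite f_rE (@demand_out_intro _ _ _ u v) //.
  by rewrite inE.
by rewrite inE eq_sym.
Qed.

(* Bridge case: orient ab in the only direction in which requirements cross
   the component X of b in H', and reroute the requirements through it. *)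
Lemma bridge_step a b H r :
  (forall r2, covers H r2 -> orientable H r2) ->
  ~~ connect (adj H) b a -> covers ((a, b) :: H) r -> orientable ((a, b) :: H) r.
Proof.
move=> IH ba cov; pose X := [set z | connect (adj H) b z].
have bX : b \in X by rewrite inE connect0.
have aX : a \notin X by rewrite inE.
have same_side e : e \in H -> (e.1 \in X) = (e.2 \in X).
  case: e => x y xyH; rewrite !inE /=.
  by apply/idP/idP => bz; apply: connect_trans bz (connect1 _); rewrite /adj xyH ?orbT.
have demand1 : demand_out r X + demand_out (converse r) X <= 1.
  rewrite -f_rE; apply: leq_trans (cov X) _.
  by rewrite /dcut /= (negbTE aX) bX -/(dcut H X) dcut_closed.
have [into | no_into] := boolP (demand_out (converse r) X).
  have no_out : ~~ demand_out r X by move: demand1; rewrite into addn1; case: demand_out.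
  exact: bridge_orient (demand_outPn no_out) (IH _ (bridge_cover aX bX same_side cov)).
apply: orientable_flip; apply: (bridge_orient (X := ~: X)).
  move=> u v ruv; rewrite !in_setC; apply: contra => vX.
  exact: (demand_outPn no_into) ruv vX.
apply: IH; apply: bridge_cover; rewrite ?in_setC ?bX //.
  by move=> e /same_side; rewrite !in_setC => ->.
by move=> Y; rewrite dcut_flip.
Qed.

Lemma orientable_of_covers H r : covers H r -> orientable H r.
Proof.
elim: {H}(size H) {-2}H (leqnn (size H)) r => [|n IH] [|[a b] H] //= sizeH r cov;
  try exact: orientable_nil.
have IH_smaller H2 r2 : size H2 <= size H -> covers H2 r2 -> orientable H2 r2.
  by move=> s2; apply: IH; apply: leq_trans s2 sizeH.
have [ba | ba] := boolP (connect (adj H) b a).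
  exact: cycle_step.
by apply: bridge_step => // r2; apply: IH_smaller.
Qed.

End Induction.

Theorem lemma2 (V : finType) (r : V -> V -> bool) (H : seq (V * V)) :
  (forall X : {set V}, f_r r X <= dcut H X) ->
  exists D : seq (V * V),
    is_orientation H D /\ (forall u v : V, r u v -> dipath D u v).
Proof. exact: orientable_of_covers. Qed.
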